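(* Let $\rho$ be a representation of $D^{2,2,2}$ and let $\{i,j,k\}=\{1,2,3\}$. Then, as linear maps $X^3_0\to X^0_0$, $$\varphi^{(0)}_i\circ\varphi^{(1)}_j\circ\varphi^{(2)}_i+\varphi^{(0)}_i\circ\varphi^{(1)}_k\circ\varphi^{(2)}_i=0 \qquad\text{and}\qquad \varphi^{(0)}_i\circ\varphi^{(1)}_i\circ\varphi^{(2)}_i=0.$$ Consequently, $\varphi^{(0)}_i\varphi^{(1)}_j\varphi^{(2)}_i(B)=\varphi^{(0)}_i\varphi^{(1)}_k\varphi^{(2)}_i(B)$ for every subspace $B\subseteq X^3_0$.
   Context: $D^{2,2,2}$ is the modular lattice generated by $x_1,y_1,x_2,y_2,x_3,y_3$ subject only to $x_i\subseteq y_i$ ($i=1,2,3$), with a greatest element $I$ adjoined. A representation $\rho$ of $D^{2,2,2}$ in a finite-dimensional vector space $X_0$ is a lattice morphism from $D^{2,2,2}$ to the subspace lattice of $X_0$, with $\rho(I)=X_0$. Write $X_i=\rho(x_i)\subseteq Y_i=\rho(y_i)$. Coxeter functor: put $R=Y_1\oplus Y_2\oplus Y_3$ and $X^1_0=\{(\eta_1,\eta_2,\eta_3)\in R:\sum\eta_i=0\}$. Let $G'_i\subseteq R$ be the triples with $i$-th coordinate in $X_i$, and $H'_i\subseteq R$ the triples with $i$-th coordinate $0$. $\Phi^+\rho$ is the representation in $X^1_0$ with $\Phi^+\rho(y_i)=G'_i\cap X^1_0$, $\Phi^+\rho(x_i)=H'_i\cap X^1_0$, $\Phi^+\rho(I)=X^1_0$.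 Iterates: let $X^n_0$ be the space of $(\Phi^+)^n\rho$, with $X^0_0=X_0$. Let $\varphi^{(n)}_i:X^{n+1}_0\to X^n_0$ be the map $(\eta_1,\eta_2,\eta_3)\mapsto\eta_i$ obtained by applying the construction to $(\Phi^+)^n\rho$. *)

From HB Require Import structures.
From mathcomp Require Import all_boot all_order all_algebra.
Set Implicit Arguments. Unset Strict Implicit. Unset Printing Implicit Defensive.
Import GRing.Theory.
Local Open Scope ring_scope.
Local Open Scope vspace_scope.

(* Triples (eta_1, eta_2, eta_3) of vectors of V, coordinates indexed by 'I_3
   (index 0,1,2 stand for the paper's 1,2,3). *)
Definition T3 (K : fieldType) (V : vectType K) : vectType K := (V * V * V)%type.

Definition coord3 (K : fieldType) (V : vectType K) (i : 'I_3) (t : T3 V) : V :=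
  if val i == 0%N then t.1.1 else if val i == 1%N then t.1.2 else t.2.

Definition inj3 (K : fieldType) (V : vectType K) (i : 'I_3) (v : V) : T3 V :=
  if val i == 0%N then (v, 0%R, 0%R) else if val i == 1%N then (0%R, v, 0%R) else (0%R, 0%R, v).

Definition proj3 (K : fieldType) (V : vectType K) (i : 'I_3) : 'Hom(T3 V, V) :=
  linfun (coord3 i).
Definition emb3 (K : fieldType) (V : vectType K) (i : 'I_3) : 'Hom(V, T3 V) :=
  linfun (inj3 i).
Definition sum3 (K : fieldType) (V : vectType K) : 'Hom(T3 V, V) :=
  linfun (fun t : T3 V => (t.1.1 + t.1.2 + t.2)%R).

Arguments proj3 {K} V i.
Arguments emb3 {K} V i.
Arguments sum3 {K} V.

(* A representation of D^{2,2,2}: the space X_0 (a subspace of an ambient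
   finite-dimensional space V) together with subspaces X_i, Y_i. *)
Record rep (K : fieldType) (V : vectType K) := Rep {
  rX0 : {vspace V};
  rX : 'I_3 -> {vspace V};
  rY : 'I_3 -> {vspace V} }.

(* Since subspace lattices are modular, lattice morphisms D^{2,2,2} -> L(X_0)
   with I |-> X_0 correspond exactly to data X_i <= Y_i <= X_0. *)
Definition is_rep (K : fieldType) (V : vectType K) (r : rep V) : Prop :=
  forall i, (rX r i <= rY r i)%VS /\ (rY r i <= rX0 r)%VS.

Definition Rsum (K : fieldType) (V : vectType K) (r : rep V) : {vspace T3 V} :=
  (\sum_(i < 3) (emb3 V i @: rY r i))%VS.

Definition CoxPlus (K : fieldType) (V : vectType K) (r : rep V) : rep (T3 V) :=
  let R := Rsum r in
  let X10 := (R :&: lker (sum3 V))%VS in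
  {| rX0 := X10;
     rY := fun i => ((R :&: (proj3 V i @^-1: rX r i)) :&: X10)%VS;
     rX := fun i => ((R :&: lker (proj3 V i)) :&: X10)%VS |}.

(** Write [w] for the [i]-th coordinate of [v] in [X^3_0].  Unwinding the
    Coxeter functor, [w] lies in the [y_i]-space of [(Phi^+)^2 rho], so
    [w] sums to zero (it is in [X^2_0]) and its [i]-th coordinate lies in the
    [x_i]-space of [Phi^+ rho], i.e. has vanishing [i]-th coordinate.  Hence
    [phi_i phi_i w = 0], and [phi_i phi_j w + phi_i phi_k w
    = phi_i (sum w) - phi_i phi_i w = 0].  The two maps [phi_i phi_j phi_i] and
    [phi_i phi_k phi_i] are thus opposite on [X^3_0], so they have the same
    image on every subspace of it. *)

From HB Require Import structures.
From mathcomp Require Import all_boot all_order all_algebra.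
Import GRing.Theory.
Local Open Scope ring_scope.

Section Triples.
Context {K : fieldType} {V : vectType K}.

Lemma coord3_is_linear (i : 'I_3) : linear (@coord3 K V i).
Proof. by move=> a x y; rewrite /coord3; case: ifP => _ //; case: ifP. Qed.

Lemma inj3_is_linear (i : 'I_3) : linear (@inj3 K V i).
Proof.
move=> a x y; rewrite /inj3; case: ifP => _; last case: ifP => _;
  by congr (_, _, _); rewrite /= ?scaler0 ?addr0 ?add0r.
Qed.

HB.instance Definition _ (i : 'I_3) :=
  GRing.isLinear.Build K (T3 V) V _ (@coord3 K V i) (coord3_is_linear i).
HB.instance Definition _ (i : 'I_3) :=
  GRing.isLinear.Build K V (T3 V) _ (@inj3 K V i) (inj3_is_linear i).

Lemma proj3E i t : proj3 V i t = coord3 i t. Proof. exact: lfunE. Qed.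

Lemma proj3_emb3 (i l : 'I_3) (y : V) :
  proj3 V i (emb3 V l y) = if i == l then y else 0.
Proof.
rewrite proj3E lfunE /coord3 /inj3.
by case: i => [[|[|[|?]]] ?] //; case: l => [[|[|[|?]]] ?].
Qed.

Definition add3 (t : T3 V) : V := t.1.1 + t.1.2 + t.2.

Lemma add3_is_linear : linear add3.
Proof.
move=> a x y; rewrite /add3 /= !scalerDr.
by rewrite [X in X + (_ + _) = _]addrACA (addrACA (_ + _) _ (a *: x.2)).
Qed.

HB.instance Definition _ := GRing.isLinear.Build K (T3 V) V _ add3 add3_is_linear.

Lemma sum3E (t : T3 V) : sum3 V t = \sum_(l < 3) proj3 V l t.
Proof. by rewrite (lfunE add3) !big_ord_recr big_ord0 /= !proj3E add0r. Qed.

Lemma ord3_neq2 (l : 'I_3) {i j k : 'I_3} : i != j -> j != k -> i != k ->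
  (l != i) && (l != j) = (l == k).
Proof.
by case: i j k l => [[|[|[|?]]] ?] [[|[|[|?]]] ?] [[|[|[|?]]] ?] [[|[|[|?]]] ?].
Qed.

Lemma proj3_add3 {i j k : 'I_3} (t : T3 V) : i != j -> j != k -> i != k ->
  proj3 V i t + proj3 V j t + proj3 V k t = sum3 V t.
Proof.
move=> ij jk ik; rewrite sum3E (bigD1 i) // (bigD1 j) 1?eq_sym //= addrA.
by rewrite (eq_bigl _ _ (fun l => ord3_neq2 l ij jk ik)) big_pred1_eq.
Qed.

Lemma proj3_sum_img (Y : 'I_3 -> {vspace V}) (i : 'I_3) (v : T3 V) :
  v \in (\sum_(l < 3) (emb3 V l @: Y l))%VS -> proj3 V i v \in Y i.
Proof.
move/memv_sumP => [vs vsY ->]; rewrite linear_sum (bigD1 i) //= big1 => [|l li].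
  by rewrite addr0; have [u Yu ->] := memv_imgP (vsY i isT); rewrite proj3_emb3 eqxx.
by have [u _ ->] := memv_imgP (vsY l isT); rewrite proj3_emb3 eq_sym (negbTE li).
Qed.

End Triples.

Lemma limg_eq_of_addr_eq0 (K : fieldType) (U W : vectType K)
    (f g : 'Hom(U, W)) (B : {vspace U}) :
  {in B, forall b, f b + g b = 0} -> (f @: B = g @: B)%VS.
Proof.
have sub_img (f1 f2 : 'Hom(U, W)) : {in B, forall b, f1 b + f2 b = 0} ->
    (f1 @: B <= f2 @: B)%VS.
  move=> f12B; apply/subvP => _ /memv_imgP [b Bb ->].
  have -> : f1 b = f2 (- b) by rewrite linearN; apply/eqP; rewrite -addr_eq0 f12B.
  by rewrite memv_img ?memvN.
move=> fgB; apply/eqP; rewrite eqEsubv !sub_img // => b Bb.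
by rewrite addrC fgB.
Qed.

Section CoxeterFunctor.
Context {K : fieldType} {V : vectType K} {r : rep V}.

Lemma sum3_CoxPlus_X0 {v} : v \in rX0 (CoxPlus r) -> sum3 V v = 0.
Proof. by rewrite memv_cap memv_ker => /andP [_ /eqP]. Qed.

Lemma proj3_CoxPlus_X0 i {v} : v \in rX0 (CoxPlus r) -> proj3 V i v \in rY r i.
Proof. by rewrite memv_cap => /andP [/proj3_sum_img]. Qed.

Lemma sum3_CoxPlus_Y i {v} : v \in rY (CoxPlus r) i -> sum3 V v = 0.
Proof. by move/(subvP (capvSr _ _)); apply: sum3_CoxPlus_X0. Qed.

Lemma proj3_CoxPlus_Y i {v} : v \in rY (CoxPlus r) i -> proj3 V i v \in rX r i.
Proof. by rewrite !memv_cap -memv_preim => /andP [/andP [_ ->]]. Qed.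

Lemma proj3_CoxPlus_X i {v} : v \in rX (CoxPlus r) i -> proj3 V i v = 0.
Proof. by rewrite !memv_cap memv_ker => /andP [/andP [_ /eqP]]. Qed.

End CoxeterFunctor.

Section SecondIterate.
Context {K : fieldType} {V : vectType K} {r : rep V}.

Lemma proj3_proj3_CoxPlus2_Y i {w} : w \in rY (CoxPlus (CoxPlus r)) i ->
  proj3 V i (proj3 (T3 V) i w) = 0.
Proof. by move/proj3_CoxPlus_Y/proj3_CoxPlus_X. Qed.

Lemma proj3_proj3_CoxPlus2_Y_opp {i j k : 'I_3} w : i != j -> j != k -> i != k ->
  w \in rY (CoxPlus (CoxPlus r)) i ->
  proj3 V i (proj3 (T3 V) j w) + proj3 V i (proj3 (T3 V) k w) = 0.
Proof.
move=> ij jk ik Yw.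
rewrite -[LHS]add0r -{1}(proj3_proj3_CoxPlus2_Y i Yw) addrA -!linearD.
by rewrite proj3_add3 // (sum3_CoxPlus_Y i Yw) linear0.
Qed.

End SecondIterate.

Theorem mainTheorem15 (K : fieldType) (V : vectType K) (r : rep V)
  (hr : is_rep r) (i j k : 'I_3) (hij : i != j) (hjk : j != k) (hik : i != k) :
  let X3 := rX0 (CoxPlus (CoxPlus (CoxPlus r))) in
  let phi0 := fun l : 'I_3 => proj3 V l in
  let phi1 := fun l : 'I_3 => proj3 (T3 V) l in
  let phi2 := fun l : 'I_3 => proj3 (T3 (T3 V)) l in
  [/\ (forall v, v \in X3 ->
         phi0 i (phi1 j (phi2 i v)) + phi0 i (phi1 k (phi2 i v)) = 0),
      (forall v, v \in X3 -> phi0 i (phi1 i (phi2 i v)) = 0)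
    & (forall B : {vspace T3 (T3 (T3 V))}, (B <= X3)%VS ->
         ((phi0 i \o phi1 j \o phi2 i) @: B)%VS
         = ((phi0 i \o phi1 k \o phi2 i) @: B)%VS)].
Proof.
move=> X3 phi0 phi1 phi2.
have opp v : v \in X3 -> phi0 i (phi1 j (phi2 i v)) + phi0 i (phi1 k (phi2 i v)) = 0.
  by move/(proj3_CoxPlus_X0 i)/(proj3_proj3_CoxPlus2_Y_opp _ hij hjk hik).
split=> [//|v /(proj3_CoxPlus_X0 i)/proj3_proj3_CoxPlus2_Y //|B BX3].
by apply: limg_eq_of_addr_eq0 => b /(subvP BX3) X3b; rewrite !comp_lfunE opp.
Qed.
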